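(* There is no C-loop $L$ whose nucleus $N$ has index $2$ in $L$ (i.e. such that $N$ has exactly two cosets in $L$).
   Context: A C-loop is a loop satisfying $x(y(yz))=((xy)y)z$ for all $x,y,z$. The nucleus $N$ of a loop is the set of elements $a$ with $a(yz)=(ay)z$, $y(az)=(ya)z$, $y(za)=(yz)a$ for all $y,z$; in a C-loop it is a normal subloop, so its cosets form the factor loop $L/N$. *)

Definition is_loop {T : Type} (mul : T -> T -> T) (e : T) : Prop :=
  (forall x, mul e x = x /\ mul x e = x) /\
  (forall a b, exists x, mul a x = b /\ forall x', mul a x' = b -> x' = x) /\
  (forall a b, exists y, mul y a = b /\ forall y', mul y' a = b -> y' = y).

Definition C_law {T : Type} (mul : T -> T -> T) : Prop :=
  forall x y z, mul x (mul y (mul y z)) = mul (mul (mul x y) y) z.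

Definition in_nucleus {T : Type} (mul : T -> T -> T) (a : T) : Prop :=
  forall y z,
    mul a (mul y z) = mul (mul a y) z /\
    mul y (mul a z) = mul (mul y a) z /\
    mul y (mul z a) = mul (mul y z) a.

Definition nucleus_coset {T : Type} (mul : T -> T -> T) (x : T) : T -> Prop :=
  fun w => exists n, in_nucleus mul n /\ w = mul x n.

Definition nucleus_index_two {T : Type} (mul : T -> T -> T) : Prop :=
  exists x y,
    nucleus_coset mul x <> nucleus_coset mul y /\
    forall z, nucleus_coset mul z = nucleus_coset mul x \/
              nucleus_coset mul z = nucleus_coset mul y.

From Stdlib Require Import Classical FunctionalExtensionality PropExtensionality.

(* If N had index 2, every non-nuclear element would lie in one coset aN;
   then products of two non-nuclear elements are nuclear, which makes aN = Na
   as well.  A C-loop is left and right alternative, a(aw) = (aa)w and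
   y(aa) = (ya)a, so writing a non-nuclear y as an or na the nucleus
   identities for a reduce to those for n: a is nuclear, a contradiction. *)

Section Loop.

Context {T : Type} {mul : T -> T -> T} {e : T}.
Hypothesis loop : is_loop mul e.

Local Infix "*" := mul.
Local Notation N := (in_nucleus mul).

Lemma mul1l x : e * x = x.
Proof. exact (proj1 (proj1 loop x)). Qed.

Lemma mul1r x : x * e = x.
Proof. exact (proj2 (proj1 loop x)). Qed.

Lemma mul_lcancel a x1 x2 : a * x1 = a * x2 -> x1 = x2.
Proof.
  intros E. destruct (proj1 (proj2 loop) a (a * x2)) as [x [_ U]].
  now rewrite (U x1 E), (U x2 eq_refl).
Qed.

Lemma mul_rcancel a x1 x2 : x1 * a = x2 * a -> x1 = x2.
Proof.
  intros E. destruct (proj2 (proj2 loop) a (x2 * a)) as [x [_ U]].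
  now rewrite (U x1 E), (U x2 eq_refl).
Qed.

Lemma nucleus_assocl a y z : N a -> a * (y * z) = a * y * z.
Proof. intros Na. exact (proj1 (Na y z)). Qed.

Lemma nucleus_assocm a y z : N a -> y * (a * z) = y * a * z.
Proof. intros Na. exact (proj1 (proj2 (Na y z))). Qed.

Lemma nucleus_assocr a y z : N a -> y * (z * a) = y * z * a.
Proof. intros Na. exact (proj2 (proj2 (Na y z))). Qed.

Lemma nucleus_unit : N e.
Proof. intros y z. now rewrite !mul1l, !mul1r. Qed.

Lemma nucleus_mul a b : N a -> N b -> N (a * b).
Proof.
  intros Na Nb y z. split; [|split].
  - now rewrite <- nucleus_assocl, (nucleus_assocl b), (nucleus_assocl a),
      (nucleus_assocl a) by assumption.
  - now rewrite <- (nucleus_assocl a), (nucleus_assocm a), (nucleus_assocm b),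
      <- (nucleus_assocm a y b) by assumption.
  - now rewrite (nucleus_assocr b z), (nucleus_assocr b y), (nucleus_assocr a y z),
      <- (nucleus_assocr b) by assumption.
Qed.

Lemma nucleus_inv a : N a -> exists a', N a' /\ a * a' = e /\ a' * a = e.
Proof.
  intros Na. destruct (proj1 (proj2 loop) a e) as [a' [Eaa' _]].
  assert (Ea'a : a' * a = e).
  { apply (mul_rcancel a').
    now rewrite <- nucleus_assocm, Eaa', mul1r, mul1l by assumption. }
  exists a'. split; [|split; assumption].
  intros y z. split; [|split].
  - apply (mul_lcancel a).
    now rewrite !(nucleus_assocl a), Eaa', !mul1l by assumption.
  - assert (Ez : z = a * (a' * z)) by now rewrite nucleus_assocl, Eaa', mul1l.
    rewrite Ez at 2.
    now rewrite (nucleus_assocm a (y * a')), <- (nucleus_assocr a y a'), Ea'a, mul1r.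
  - apply (mul_rcancel a).
    now rewrite <- !(nucleus_assocr a), Ea'a, !mul1r by assumption.
Qed.

Lemma nucleus_coset_refl x : nucleus_coset mul x x.
Proof. exists e. split; [exact nucleus_unit | now rewrite mul1r]. Qed.

Lemma nucleus_coset_unitP w : nucleus_coset mul e w <-> N w.
Proof.
  split.
  - intros [n [Nn ->]]. now rewrite mul1l.
  - intros Nw. exists w. now rewrite mul1l.
Qed.

Lemma nucleus_coset_nucleus a : N a -> nucleus_coset mul a = nucleus_coset mul e.
Proof.
  intros Na. destruct (nucleus_inv a Na) as [a' [Na' [Eaa' _]]].
  apply functional_extensionality. intros w. apply propositional_extensionality.
  split; intros [n [Nn ->]].
  - exists (a * n). split; [now apply nucleus_mul | now rewrite mul1l].
  - exists (a' * n). split; [now apply nucleus_mul |].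
    now rewrite nucleus_assocl, Eaa'.
Qed.

Lemma index_two_complement_coset :
  nucleus_index_two mul ->
  exists a, ~ N a /\ forall z, ~ N z -> nucleus_coset mul a z.
Proof.
  intros [x [y [Nxy Hz]]].
  (* one of the two cosets is N = eN; the other one, bN, holds the rest *)
  assert (Hb : exists b c, nucleus_coset mul b <> nucleus_coset mul c /\
            nucleus_coset mul e = nucleus_coset mul c /\
            forall z, nucleus_coset mul z = nucleus_coset mul b \/
                      nucleus_coset mul z = nucleus_coset mul c).
  { destruct (Hz e) as [E | E].
    - exists y, x. repeat split; auto. intros z. destruct (Hz z); tauto.
    - exists x, y. auto. }
  destruct Hb as [b [c [Nbc [Ec Hbc]]]].
  exists b. split.
  - intros Nb. apply Nbc. now rewrite nucleus_coset_nucleus, Ec.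
  - intros z Nz. destruct (Hbc z) as [E | E].
    + rewrite <- E. apply nucleus_coset_refl.
    + exfalso. apply Nz, nucleus_coset_unitP.
      rewrite Ec, <- E. apply nucleus_coset_refl.
Qed.

Hypothesis C : C_law mul.

Lemma C_left_alternative x w : x * (x * w) = x * x * w.
Proof. pose proof (C e x w) as E. now rewrite !mul1l in E. Qed.

Lemma C_right_alternative y x : y * (x * x) = y * x * x.
Proof. pose proof (C y x e) as E. now rewrite !mul1r in E. Qed.

Section ComplementCoset.

Context {a : T}.
Hypothesis complement : forall z, ~ N z -> nucleus_coset mul a z.

Lemma nonnuclear_mul b c : ~ N b -> ~ N c -> N (b * c).
Proof.
  intros Nb Nc. apply NNPP. intros Nbc.
  destruct (complement _ Nbc) as [m [Nm Em]].
  destruct (complement _ Nb) as [k [Nk Ek]].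
  destruct (nucleus_inv k Nk) as [k' [Nk' [Ekk' _]]].
  assert (Ea : a = b * k') by now rewrite Ek, <- nucleus_assocr, Ekk', mul1r.
  rewrite Ea, <- nucleus_assocm in Em by assumption.
  apply Nc. rewrite (mul_lcancel _ _ _ Em). now apply nucleus_mul.
Qed.

Lemma nonnuclear_right_coset z : ~ N z -> exists n, N n /\ z = n * a.
Proof.
  intros Nz. destruct (proj2 (proj2 loop) a z) as [n [En _]].
  exists n. split; [| now rewrite En].
  apply NNPP. intros Nn. apply Nz. rewrite <- En.
  apply nonnuclear_mul; [assumption |].
  intros Na. destruct (complement _ Nz) as [m [Nm Em]].
  apply Nz. rewrite Em. now apply nucleus_mul.
Qed.

Lemma complement_coset_nucleus : N a.
Proof.
  intros y z. split; [|split].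
  - destruct (classic (N y)) as [Ny | Ny].
    + now apply nucleus_assocm.
    + destruct (complement _ Ny) as [n [Nn ->]].
      now rewrite <- (nucleus_assocm n a z), C_left_alternative,
        (nucleus_assocm n), C_left_alternative by assumption.
  - destruct (classic (N y)) as [Ny | Ny].
    + now apply nucleus_assocl.
    + destruct (nonnuclear_right_coset _ Ny) as [n [Nn ->]].
      now rewrite <- (nucleus_assocl n a (a * z)), C_left_alternative,
        <- (nucleus_assocl n a a), <- (nucleus_assocl n (a * a) z) by assumption.
  - destruct (classic (N z)) as [Nz | Nz].
    + now apply nucleus_assocm.
    + destruct (nonnuclear_right_coset _ Nz) as [n [Nn ->]].
      now rewrite <- (nucleus_assocl n a a), !(nucleus_assocm n), C_right_alternative
        by assumption.
Qed.

End ComplementCoset.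

End Loop.

Theorem lemma2p7 (T : Type) (mul : T -> T -> T) (e : T) :
  is_loop mul e -> C_law mul -> ~ nucleus_index_two mul.
Proof.
  intros loop C Hindex.
  destruct (index_two_complement_coset loop Hindex) as [a [Na complement]].
  exact (Na (complement_coset_nucleus loop C complement)).
Qed.
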